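(* Let $\mathscr D:\mathscr N=\mathscr N_1\cup\cdots\cup\mathscr N_k$ be a pairwise min-max decomposition of a chemical reaction network $\mathscr N$ such that every linkage class of $\mathscr N$ contains at most one common complex. Then $\mathscr D$ is incidence independent.
   Context: A CRN $\mathscr N=(\mathscr S,\mathscr C,\mathscr R)$ is viewed as a directed graph on its complexes with arcs its reactions; linkage classes are the connected components of the underlying undirected graph. A decomposition $\mathscr N=\mathscr N_1\cup\cdots\cup\mathscr N_k$ ($k\ge2$) is given by a partition $\{\mathscr R_1,\dots,\mathscr R_k\}$ of the reaction set; the subnetwork $\mathscr N_i$ has reactions $\mathscr R_i$ and complex set $\mathscr C_i$ consisting of the complexes occurring in reactions of $\mathscr R_i$. The set $\mathscr C_{\mathscr D}$ of common complexes consists of the complexes lying in the complex sets of at least two distinct subnetworks. The decomposition is pairwise min-max (PMM) if for all $i\ne j$, either $\mathscr C_i\cap\mathscr C_j=\varnothing$ or $\mathscr C_i\cap\mathscr C_j=\mathscr C_{\mathscr D}$. With $n,\ell$ the numbers of complexes and linkage classes of $\mathscr N$ and $n_i,\ell_i$ those of $\mathscr N_i$, the decomposition is incidence independent if the image of the incidence map of $\mathscr N$ (the linear map $\mathbb R^{\mathscr R}\to\mathbb R^{\mathscr C}$ sending a reaction $y\to y'$ to $\omega_{y'}-\omega_y$) is the direct sum of the images of the incidence maps of the $\mathscr N_i$, equivalently $n-\ell=\sum_i(n_i-\ell_i)$. *)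

From HB Require Import structures.
From Stdlib Require Import Rdefinitions.
From mathcomp Require Import all_boot all_order all_algebra.
From mathcomp Require Import Rstruct.
Set Implicit Arguments. Unset Strict Implicit. Unset Printing Implicit Defensive.
Import GRing.Theory Num.Theory.
Local Open Scope ring_scope.
Notation R := Rdefinitions.R.

Definition is_crn (C Rx : finType) (src tgt : Rx -> C) : Prop :=
  [/\ forall r, src r != tgt r,
      forall c, exists r, src r = c \/ tgt r = c
    & injective (fun r => (src r, tgt r))].

Definition adj (C Rx : finType) (src tgt : Rx -> C) : rel C :=
  fun x y => [exists r, ((src r == x) && (tgt r == y)) || ((src r == y) && (tgt r == x))].

Definition same_linkage_class (C Rx : finType) (src tgt : Rx -> C) : rel C :=
  connect (adj src tgt).

(* A decomposition into k subnetworks: part r = i means r belongs to R_i.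
   It is a partition of the reaction set into k (nonempty) blocks, k >= 2. *)
Definition is_decomposition (Rx : finType) (k : nat) (part : Rx -> 'I_k) : Prop :=
  (2 <= k)%N /\ forall i : 'I_k, exists r, part r = i.

Definition sub_complexes (C Rx : finType) (src tgt : Rx -> C) (k : nat)
    (part : Rx -> 'I_k) (i : 'I_k) : {set C} :=
  [set c | [exists r, (part r == i) && ((src r == c) || (tgt r == c))]].

Definition common_complexes (C Rx : finType) (src tgt : Rx -> C) (k : nat)
    (part : Rx -> 'I_k) : {set C} :=
  [set c | [exists i, exists j, [&& i != j, c \in sub_complexes src tgt part i
                                         & c \in sub_complexes src tgt part j]]].

Definition is_PMM (C Rx : finType) (src tgt : Rx -> C) (k : nat)
    (part : Rx -> 'I_k) : Prop :=
  forall i j : 'I_k, i != j ->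
    sub_complexes src tgt part i :&: sub_complexes src tgt part j = set0 \/
    sub_complexes src tgt part i :&: sub_complexes src tgt part j
      = common_complexes src tgt part.

(* Incidence vector of reaction r = (y -> y') in R^C : omega_{y'} - omega_y,
   coordinates indexed by enum C. *)
Definition inc_vec (C Rx : finType) (src tgt : Rx -> C) (r : Rx) : 'rV[R]_#|C| :=
  \row_j (((enum_val j == tgt r)%:R : R) - (enum_val j == src r)%:R).

(* Matrix whose row space is the image of the incidence map of the
   network restricted to the reactions satisfying P (rows of other
   reactions are zero). *)
Definition inc_mx (C Rx : finType) (src tgt : Rx -> C) (P : pred Rx)
    : 'M[R]_(#|Rx|, #|C|) :=
  \matrix_i (if P (enum_val i) then inc_vec src tgt (enum_val i) else 0).

(* image of the incidence map of the subnetwork N_i (as a canonical square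
   matrix whose row space is that image) *)
Definition sub_inc_mx (C Rx : finType) (src tgt : Rx -> C) (k : nat)
    (part : Rx -> 'I_k) (i : 'I_k) : 'M[R]_#|C| :=
  let A := inc_mx src tgt (fun r => part r == i) in (<< A >>)%MS.

Definition incidence_independent (C Rx : finType) (src tgt : Rx -> C) (k : nat)
    (part : Rx -> 'I_k) : Prop :=
  ((\sum_(i < k) sub_inc_mx src tgt part i)%MS == inc_mx src tgt predT)%MS
  /\ mxdirect (\sum_(i < k) sub_inc_mx src tgt part i)%MS.

From HB Require Import structures.
From mathcomp Require Import all_boot all_order all_algebra.
From mathcomp Require Import Rstruct.
Set Implicit Arguments. Unset Strict Implicit. Unset Printing Implicit Defensive.
Import GRing.Theory.
Local Open Scope ring_scope.

(* Suppose vectors v_j in the images of the blocks N_j sum to zero; we show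
   every v_j vanishes.  A vector in the image of the incidence map of a set of
   reactions sums to zero over any set of complexes closed under those
   reactions.  Applied to singletons, v_j vanishes off C_j, hence (the v_j
   summing to zero) off the common complexes.  Applied to the connected
   component in N_j of a common complex x, whose other complexes lie in the
   linkage class of x and so are not common, it gives v_j(x) = 0 as well. *)

Lemma sum0_mxdirect_sums (F : fieldType) (I : finType) n (A_ : I -> 'M[F]_n) :
  (forall v : I -> 'rV[F]_n, (forall i, v i <= A_ i)%MS ->
     \sum_i v i = 0 -> forall i, v i = 0) ->
  mxdirect (\sum_i A_ i).
Proof.
move=> indepA; apply/mxdirect_sumsP => i _; apply/eqP; rewrite -submx0.
apply/row_subP => r; rewrite submx0; set w := row r _.
have wAi : (w <= A_ i)%MS by rewrite (submx_trans (row_sub r _)) ?capmxSl.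
have /sub_sumsmxP[u wE] : (w <= \sum_(j | j != i) A_ j)%MS.
  by rewrite (submx_trans (row_sub r _)) ?capmxSr.
pose v j := if j == i then - w else u j *m A_ j.
have vA j : (v j <= A_ j)%MS.
  by rewrite /v; case: eqP => [->|_]; rewrite ?eqmx_opp ?submxMl.
have sum_v0 : \sum_j v j = 0.
  rewrite (bigD1 i) //= {1}/v eqxx wE addrC; apply/eqP; rewrite subr_eq0.
  by apply/eqP/eq_bigr => j /negbTE ij; rewrite /v ij.
by have := indepA v vA sum_v0 i; rewrite /v eqxx => /eqP; rewrite oppr_eq0.
Qed.

Section IncidenceImage.

Variables (C Rx : finType) (src tgt : Rx -> C).

Definition sub_adj (P : pred Rx) : rel C :=
  fun x y => [exists r, P r &&
    (((src r == x) && (tgt r == y)) || ((src r == y) && (tgt r == x)))].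

Lemma sub_adj_sym (P : pred Rx) : symmetric (sub_adj P).
Proof.
by move=> x y; apply/existsP/existsP => -[r]; exists r; rewrite orbC.
Qed.

Lemma sub_adj_reaction (P : pred Rx) r : P r -> sub_adj P (src r) (tgt r).
Proof. by move=> Pr; apply/existsP; exists r; rewrite Pr !eqxx. Qed.

Lemma sum_inc_vec_closed r (S : {pred C}) :
  (src r \in S) = (tgt r \in S) ->
  \sum_(c in S) inc_vec src tgt r 0 (enum_rank c) = 0.
Proof.
have sum_eq (t : C) : \sum_(c in S) ((c == t)%:R : R) = (t \in S)%:R.
  rewrite big_mkcond (bigD1 t) //= eqxx big1 ?addr0 => [|c /negbTE ct].
    by case: (t \in S).
  by rewrite ct if_same.
move=> srcS; under eq_bigr do rewrite mxE enum_rankK.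
by rewrite sumrB !sum_eq srcS subrr.
Qed.

Lemma sum_row_inc_mx_closed (P : pred Rx) (S : {pred C}) (w : 'rV[R]_#|C|) :
  closed (sub_adj P) S -> (w <= inc_mx src tgt P)%MS ->
  \sum_(c in S) w 0 (enum_rank c) = 0.
Proof.
move=> closedS /submxP[D ->].
under eq_bigr do rewrite mxE.
rewrite exchange_big big1 // => i _; rewrite -mulr_sumr.
under eq_bigr do rewrite mxE.
case: ifP => [Pi | _]; last by rewrite big1 ?mulr0 // => c _; rewrite mxE.
by rewrite sum_inc_vec_closed ?mulr0 // (closedS _ _ (sub_adj_reaction Pi)).
Qed.

Lemma inc_mx_sub (P Q : pred Rx) :
  {subset P <= Q} -> (inc_mx src tgt P <= inc_mx src tgt Q)%MS.
Proof.
move=> PQ; apply/row_subP => i; rewrite rowK.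
case: ifP => [Pi | _]; last exact: sub0mx.
have Qi : Q (enum_val i) by exact: PQ.
by have := row_sub i (inc_mx src tgt Q); rewrite rowK Qi.
Qed.

Lemma connect_sub_adj_linkage (P : pred Rx) :
  subrel (connect (sub_adj P)) (same_linkage_class src tgt).
Proof.
apply: connect_sub => x y /existsP[r /andP[_ xy]].
by apply: connect1; apply/existsP; exists r.
Qed.

Variables (k : nat) (part : Rx -> 'I_k).

Local Notation block j := (fun r : Rx => part r == j).

Lemma inc_mx_blocks :
  inc_mx src tgt predT = \sum_j inc_mx src tgt (block j).
Proof.
apply/matrixP => r c; rewrite summxE (bigD1 (part (enum_val r))) //= big1.
  by rewrite addr0 [LHS]mxE [RHS]mxE eqxx.
by move=> j jr; rewrite mxE eq_sym (negbTE jr) mxE.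
Qed.

Lemma sums_sub_inc_mx :
  (\sum_j sub_inc_mx src tgt part j == inc_mx src tgt predT)%MS.
Proof.
apply/andP; split.
  by apply/sumsmx_subP => j _; rewrite genmxE inc_mx_sub.
by rewrite inc_mx_blocks summx_sub_sums // => j _; rewrite genmxE.
Qed.

Lemma closed_notin_sub_complexes j x :
  x \notin sub_complexes src tgt part j -> closed (sub_adj (block j)) [set x].
Proof.
rewrite inE => /existsPn x_notin y z /existsP[r /andP[jr yz]].
move: (x_notin r); rewrite jr negb_or => /andP[/negbTE srcx /negbTE tgtx].
by case/orP: yz => /andP[/eqP <- /eqP <-]; rewrite !inE srcx tgtx.
Qed.

Lemma row_inc_mx_notin_sub_complexes j (w : 'rV[R]_#|C|) x :
  (w <= inc_mx src tgt (block j))%MS -> x \notin sub_complexes src tgt part j ->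
  w 0 (enum_rank x) = 0.
Proof.
move=> wj /closed_notin_sub_complexes closedx.
have := sum_row_inc_mx_closed closedx wj.
by rewrite big_set1.
Qed.

Section BlockRelation.

Variable v : 'I_k -> 'rV[R]_#|C|.
Hypotheses (v_block : forall j, (v j <= inc_mx src tgt (block j))%MS)
           (sum_v0 : \sum_j v j = 0).

Lemma block_row_off_common j x :
  x \notin common_complexes src tgt part -> v j 0 (enum_rank x) = 0.
Proof.
move=> x_notin; have [xj|] := boolP (x \in sub_complexes src tgt part j);
  last exact: row_inc_mx_notin_sub_complexes.
have : (\sum_l v l) 0 (enum_rank x) = 0 by rewrite sum_v0 mxE.
rewrite summxE (bigD1 j) //= big1 ?addr0 // => l lj.
apply: row_inc_mx_notin_sub_complexes (v_block l) _.
apply: contra x_notin => xl.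
rewrite inE; apply/existsP; exists j; apply/existsP; exists l.
by rewrite eq_sym lj xj xl.
Qed.

Hypothesis one_common_per_class : forall c d,
  c \in common_complexes src tgt part -> d \in common_complexes src tgt part ->
  same_linkage_class src tgt c d -> c = d.

Lemma block_relation_trivial j : v j = 0.
Proof.
apply/rowP => l; rewrite mxE -(enum_valK l); set x := enum_val l.
have [x_common|] := boolP (x \in common_complexes src tgt part);
  last exact: block_row_off_common.
have closed_comp : closed (sub_adj (block j)) (connect (sub_adj (block j)) x).
  by apply: connect_closed; apply/sym_connect_sym/sub_adj_sym.
have := sum_row_inc_mx_closed closed_comp (v_block j).
rewrite (bigD1 x) /=; last exact: connect0.
rewrite big1 ?addr0 // => c /andP[xc cx].
apply: block_row_off_common; apply: contra cx => c_common.
have link_xc := connect_sub_adj_linkage xc.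
by rewrite -(one_common_per_class x_common c_common link_xc).
Qed.

End BlockRelation.

End IncidenceImage.

Theorem proposition6 (C Rx : finType) (src tgt : Rx -> C) (k : nat)
    (part : Rx -> 'I_k) :
  is_crn src tgt ->
  is_decomposition part ->
  is_PMM src tgt part ->
  (forall c d, c \in common_complexes src tgt part ->
               d \in common_complexes src tgt part ->
               same_linkage_class src tgt c d -> c = d) ->
  incidence_independent src tgt part.
Proof.
move=> _ _ _ one_common_per_class; split; first exact: sums_sub_inc_mx.
apply: sum0_mxdirect_sums => v v_block sum_v0.
apply: block_relation_trivial sum_v0 one_common_per_class => j.
by have := v_block j; rewrite /sub_inc_mx genmxE.
Qed.
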